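(* Let $\mathcal{S}=\{c\in\mathbb{M}_2: 0\le c\le 1,\ \operatorname{trace}(c)=1,\ 0<\det(c)<\tfrac14\}$. Let $a=\begin{pmatrix} t&\alpha\\ \bar\alpha&1-t\end{pmatrix}$ and $b=\begin{pmatrix} x& y+iz\\ y-iz&1-x\end{pmatrix}$ be elements of $\mathcal{S}$ (with $t,x,y,z\in\mathbb{R}$, $\alpha\in\mathbb{C}$). Let $\lambda_1>\lambda_2$ be the eigenvalues of $a$, and set $\widetilde a=(t,\operatorname{Re}\alpha,\operatorname{Im}\alpha)$, $\widetilde{a'}=(1-t,-\operatorname{Re}\alpha,-\operatorname{Im}\alpha)$, $\widetilde{p_a}=\frac{1}{\lambda_1-\lambda_2}(t-\lambda_2,\operatorname{Re}\alpha,\operatorname{Im}\alpha)$, $\widetilde{p_a'}=\frac{1}{\lambda_1-\lambda_2}(\lambda_1-t,-\operatorname{Re}\alpha,-\operatorname{Im}\alpha)$, and $\mathcal{E}_a=\{v\in\mathbb{R}^3: d_2(v,\widetilde a)+d_2(v,\widetilde{a'})=1\}$, where $d_2$ is the Euclidean distance on $\mathbb{R}^3$. Then $a$ is absolutely compatible with $b$ if, and only if, the point $\widetilde b=(x,y,z)$ lies in $\mathcal{E}_a\setminus\{\widetilde{p_a},\widetilde{p_a'}\}$.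
   Context: $\mathbb{M}_2$ is the algebra of $2\times2$ complex matrices; $\operatorname{trace}$ is the non-normalized trace. For $x\in\mathbb{M}_2$, $|x|=(x^*x)^{1/2}$. Elements $0\le a,b\le 1$ are absolutely compatible if $|a-b|+|1-a-b|=1$. *)

From HB Require Import structures.
From mathcomp Require Import all_boot all_order all_algebra.
From mathcomp Require Import complex.
From mathcomp Require Import reals.
From Stdlib Require Import ClassicalEpsilon.
Set Implicit Arguments.
Unset Strict Implicit.
Unset Printing Implicit Defensive.
Import Order.TTheory GRing.Theory Num.Theory.
Local Open Scope ring_scope.
Local Open Scope sesquilinear_scope.
Local Open Scope complex_scope.

Section Defs.
Variable R : realType.
Local Notation C := (R[i]).

Definition adj2 (A : 'M[C]_2) : 'M[C]_2 := A ^t*.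

Definition psdmx (A : 'M[C]_2) : Prop :=
  adj2 A = A /\ forall v : 'rV[C]_2, 0 <= (v *m A *m v ^t*) 0 0.

Definition mabs (X : 'M[C]_2) : 'M[C]_2 :=
  epsilon (inhabits 0) (fun M => psdmx M /\ M *m M = adj2 X *m X).

Definition abs_compatible (a b : 'M[C]_2) : Prop :=
  mabs (a - b) + mabs (1 - a - b) = 1.

Definition inS (c : 'M[C]_2) : Prop :=
  psdmx c /\ psdmx (1 - c) /\ \tr c = 1 /\ 0 < \det c /\ \det c < 4^-1.

Definition mx2 (p q r s : C) : 'M[C]_2 :=
  \matrix_(i < 2, j < 2)
    (if i == 0 :> nat then (if j == 0 :> nat then p else q)
     else (if j == 0 :> nat then r else s)).

Definition amat (t : R) (alpha : C) : 'M[C]_2 :=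
  mx2 t%:C alpha (Num.conj alpha) (1 - t)%:C.

Definition bmat (x y z : R) : 'M[C]_2 :=
  mx2 x%:C (y%:C + 'i * z%:C) (y%:C - 'i * z%:C) (1 - x)%:C.

Definition pt3 (u v w : R) : 'rV[R]_3 := \row_(k < 3) [:: u; v; w]`_k.

Definition d2 (v w : 'rV[R]_3) : R := Num.sqrt (\sum_(k < 3) (v 0 k - w 0 k) ^+ 2).

End Defs.

From HB Require Import structures.
From mathcomp Require Import all_boot all_order all_algebra.
From mathcomp Require Import complex reals ring lra.
From Stdlib Require Import ClassicalEpsilon.
Import Order.TTheory GRing.Theory Num.Theory.
Set Implicit Arguments.
Unset Strict Implicit.
Local Open Scope ring_scope.
Local Open Scope complex_scope.

(** Both [a - b] and [1 - a - b] are traceless and self-adjoint, i.e. of the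
    form [u sigma_z + v sigma_x - w sigma_y], and such a matrix [X] satisfies
    [X^* X = (u^2 + v^2 + w^2) 1].  By uniqueness of positive square roots,
    [|a - b|] and [|1 - a - b|] are therefore the scalars [d2(b~, a~)] and
    [d2(b~, a'~)], so absolute compatibility says exactly that [b~] lies on [E_a].
    The two excluded points cost nothing: since [l1 + l2 = 1], [b~ = p_a] or
    [b~ = p_a'] would make [b] the spectral projection [(a - l2)/(l1 - l2)] or
    [(l1 - a)/(l1 - l2)] of [a], whose determinant vanishes, while [det b > 0]. *)

Lemma eigenvalue_det (F : fieldType) n (A : 'M[F]_n) a :
  eigenvalue A a -> \det (a%:M - A) = 0.
Proof.
case/eigenvalueP => v vA v_nz; apply/eqP/det0P; exists v => //.
by rewrite mulmxBr vA mul_mx_scalar subrr.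
Qed.

Section TwoByTwo.
Variable R : realType.
Local Open Scope sesquilinear_scope.
Local Notation C := R[i].
Local Notation Re := (@complex.Re R).
Local Notation Im := (@complex.Im R).
Implicit Types (t x y z u v w k m l : R) (alpha p q r s : C) (M N X : 'M[C]_2).

Lemma eq_complexP (z z' : C) : z = z' <-> Re z = Re z' /\ Im z = Im z'.
Proof. by split=> [-> | ]; case: z z' => a b [c d] // /= [-> ->]. Qed.

Lemma mx2_ext M N :
  M 0 0 = N 0 0 -> M 0 1 = N 0 1 -> M 1 0 = N 1 0 -> M 1 1 = N 1 1 -> M = N.
Proof.
move=> e00 e01 e10 e11; apply/matrixP => i j.
have ord2 (k : 'I_2) : k = 0 \/ k = 1.
  by case: k => [[|[|//]] ?]; [left | right]; apply: val_inj.
by case: (ord2 i) => ->; case: (ord2 j) => ->.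
Qed.

Lemma mx2_eta M : M = mx2 (M 0 0) (M 0 1) (M 1 0) (M 1 1).
Proof. by apply: mx2_ext; rewrite mxE. Qed.

Lemma mx2_inj p q r s p' q' r' s' :
  mx2 p q r s = mx2 p' q' r' s' -> [/\ p = p', q = q', r = r' & s = s'].
Proof.
by move=> /matrixP e; split; [move: (e 0 0) | move: (e 0 1) | move: (e 1 0) | move: (e 1 1)];
  rewrite !mxE.
Qed.

Lemma mul_mx2 p q r s p' q' r' s' :
  mx2 p q r s *m mx2 p' q' r' s' =
  mx2 (p * p' + q * r') (p * q' + q * s') (r * p' + s * r') (r * q' + s * s').
Proof. by apply: mx2_ext; rewrite !mxE !big_ord_recl big_ord0 !mxE /= addr0. Qed.

Lemma adj2_mx2 p q r s :
  adj2 (mx2 p q r s) = mx2 (Num.conj p) (Num.conj r) (Num.conj q) (Num.conj s).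
Proof. by apply: mx2_ext; rewrite !mxE. Qed.

Lemma scalar_mx2 p : p%:M = mx2 p 0 0 p.
Proof. by apply: mx2_ext; rewrite !mxE. Qed.

Lemma det_mx2 p q r s : \det (mx2 p q r s) = p * s - q * r.
Proof.
rewrite (expand_det_row _ 0) !big_ord_recl big_ord0 /cofactor !det_mx11 !mxE /=.
by rewrite addr0 expr0 expr1 !mul1r mulN1r mulrN.
Qed.

Lemma hermitian_mx2 M :
  adj2 M = M -> exists (p s : R) q, M = mx2 p%:C q (Num.conj q) s%:C.
Proof.
rewrite [M]mx2_eta adj2_mx2 => /mx2_inj[e00 e01 _ e11].
exists (Re (M 0 0)), (Re (M 1 1)), (M 0 1); congr mx2 => //.
- by case: (M 0 0) e00 => a b [Nb]; apply/eq_complexP; split=> //=; lra.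
- by rewrite -e01 conjCK.
- by case: (M 1 1) e11 => a b [Nb]; apply/eq_complexP; split=> //=; lra.
Qed.

Lemma form_mx2 (v : 'rV[C]_2) p q r s :
  (v *m mx2 p q r s *m v ^t*) 0 0 =
  v 0 0 * p * Num.conj (v 0 0) + v 0 0 * q * Num.conj (v 0 1)
  + v 0 1 * r * Num.conj (v 0 0) + v 0 1 * s * Num.conj (v 0 1).
Proof.
rewrite !mxE !big_ord_recl !big_ord0 !mxE !big_ord_recl !big_ord0 !mxE /=.
have -> : lift ord0 ord0 = 1 :> 'I_2 by apply: val_inj.
have -> : ord0 = 0 :> 'I_2 by apply: val_inj.
ring.
Qed.

Lemma psdmx_scalar k : 0 <= k -> psdmx k%:C%:M.
Proof.
move=> k_ge0; split.
  by rewrite scalar_mx2 adj2_mx2 conjC0 conj_Creal // complex_real.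
move=> v; rewrite scalar_mx2 form_mx2.
have -> : v 0 0 * k%:C * Num.conj (v 0 0) + v 0 0 * 0 * Num.conj (v 0 1)
    + v 0 1 * 0 * Num.conj (v 0 0) + v 0 1 * k%:C * Num.conj (v 0 1)
  = k%:C * (v 0 0 * Num.conj (v 0 0) + v 0 1 * Num.conj (v 0 1)) by ring.
by rewrite mulr_ge0 ?addr_ge0 ?mul_conjC_ge0 ?ler0c.
Qed.

Lemma psdmx_sqrt_scalar (c : R) M :
  psdmx M -> M *m M = c%:C%:M -> M = (Num.sqrt c)%:C%:M.
Proof.
case=> /hermitian_mx2[p [s [[qr qi] ->]]] M_ge0.
rewrite mul_mx2 scalar_mx2 => /mx2_inj[/eq_complexP[/= e00 _] /eq_complexP[/= e01r e01i] _
  /eq_complexP[/= e11 _]].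
have := M_ge0 (\row_j [:: 1%:C; 0%:C]`_j).
rewrite form_mx2 !mxE lecE /= => /andP[_ p_ge0].
have := M_ge0 (\row_j [:: 0%:C; 1%:C]`_j).
rewrite form_mx2 !mxE lecE /= => /andP[_ s_ge0].
(* [M ^+ 2 = c] only gives [q * (p + s) = 0]; when [p = s = 0], this vector detects [q]. *)
have := M_ge0 (\row_j [:: 1%:C; - (qr +i* qi)]`_j).
rewrite form_mx2 !mxE lecE /= => /andP[_ q_form].
have ps : p = s by nra.
have [qr0 qi0] : qr = 0 /\ qi = 0.
  by have [p_le0 | p_gt0] := lerP p 0; split; nra.
have pc : p = Num.sqrt c.
  have -> : c = p ^+ 2 by rewrite -e00 qr0 qi0; ring.
  by rewrite sqrtr_sqr ger0_norm //; lra.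
rewrite scalar_mx2 -ps -pc qr0 qi0; congr mx2; apply/eq_complexP; split=> //=; lra.
Qed.

Lemma mabs_scalar X (c : R) :
  0 <= c -> adj2 X *m X = c%:C%:M -> mabs X = (Num.sqrt c)%:C%:M.
Proof.
move=> c_ge0 XX.
have sqrt_sq : (Num.sqrt c)%:C%:M *m (Num.sqrt c)%:C%:M = adj2 X *m X.
  by rewrite XX -scalar_mxM -rmorphM /= -expr2 sqr_sqrtr.
have [mabs_psd mabs_sq] : psdmx (mabs X) /\ mabs X *m mabs X = adj2 X *m X.
  apply: (epsilon_spec _ (fun M => psdmx M /\ M *m M = adj2 X *m X)).
  by exists (Num.sqrt c)%:C%:M; split=> //; apply/psdmx_scalar/sqrtr_ge0.
by apply: psdmx_sqrt_scalar; rewrite // mabs_sq.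
Qed.

Definition pauli_mx u v w : 'M[C]_2 :=
  mx2 u%:C (v%:C + 'i * w%:C) (v%:C - 'i * w%:C) (- u)%:C.

Lemma adj2_pauli_mx_mul u v w :
  adj2 (pauli_mx u v w) *m pauli_mx u v w = (u ^+ 2 + v ^+ 2 + w ^+ 2)%:C%:M.
Proof.
by rewrite adj2_mx2 mul_mx2 scalar_mx2; congr mx2; apply/eq_complexP; split=> /=; ring.
Qed.

Lemma mabs_pauli_mx u v w :
  mabs (pauli_mx u v w) = (Num.sqrt (u ^+ 2 + v ^+ 2 + w ^+ 2))%:C%:M.
Proof. by apply: mabs_scalar; [rewrite !addr_ge0 ?sqr_ge0 | exact: adj2_pauli_mx_mul]. Qed.

Lemma amat_sub_bmat t alpha x y z :
  amat t alpha - bmat x y z = pauli_mx (t - x) (Re alpha - y) (Im alpha - z).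
Proof.
by case: alpha => ar ai; apply: mx2_ext; rewrite !mxE /=; apply/eq_complexP; split=> /=; ring.
Qed.

Lemma one_sub_amat_bmat t alpha x y z :
  1 - amat t alpha - bmat x y z = pauli_mx (1 - t - x) (- Re alpha - y) (- Im alpha - z).
Proof.
by case: alpha => ar ai; apply: mx2_ext; rewrite !mxE /=; apply/eq_complexP; split=> /=; ring.
Qed.

Lemma det_sub_amat t alpha l :
  \det (l%:C%:M - amat t alpha) =
  ((l - t) * (l - (1 - t)) - (Re alpha ^+ 2 + Im alpha ^+ 2))%:C.
Proof.
case: alpha => ar ai; rewrite (mx2_eta (_ - amat _ _)) det_mx2 !mxE /=.
by apply/eq_complexP; split=> /=; ring.
Qed.

Lemma eigenvalue_amat t alpha l :
  eigenvalue (amat t alpha) l%:C -> (l - t) * (l - (1 - t)) = Re alpha ^+ 2 + Im alpha ^+ 2.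
Proof.
move/eigenvalue_det; rewrite det_sub_amat => /eq_complexP[/= char_eq _].
by apply/eqP; rewrite -subr_eq0 char_eq.
Qed.

Lemma eigenvalue_amat_sum t alpha (l1 l2 : R) :
  eigenvalue (amat t alpha) l1%:C -> eigenvalue (amat t alpha) l2%:C -> l2 < l1 ->
  l1 + l2 = 1.
Proof.
move=> /eigenvalue_amat ev1 /eigenvalue_amat ev2 l21.
have : (l1 - l2) * (l1 + l2 - 1) = (l1 - t) * (l1 - (1 - t)) - (l2 - t) * (l2 - (1 - t)).
  by ring.
rewrite ev1 ev2 subrr.
by move/eqP; rewrite mulf_eq0 subr_eq0 gt_eqF //= subr_eq0 => /eqP.
Qed.

Lemma bmat_spectral t alpha k m :
  k * (2 * m - 1) = 1 ->
  bmat (k * (m - t)) (- (k * Re alpha)) (- (k * Im alpha)) = k%:C *: (m%:C%:M - amat t alpha).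
Proof.
by case: alpha => ar ai km; apply: mx2_ext; rewrite !mxE /=; apply/eq_complexP; split=> /=; lra.
Qed.

Lemma pt3_inj u v w u' v' w' :
  pt3 u v w = pt3 u' v' w' -> [/\ u = u', v = v' & w = w'].
Proof.
by move=> /matrixP e; split; [move: (e 0 0) | move: (e 0 1) | move: (e 0 2)]; rewrite !mxE.
Qed.

Lemma scale_pt3 k u v w : k *: pt3 u v w = pt3 (k * u) (k * v) (k * w).
Proof. by apply/matrixP => i j; rewrite !mxE; case: j => [[|[|[|]]] ?]. Qed.

Lemma d2C (p q : 'rV[R]_3) : d2 p q = d2 q p.
Proof. by rewrite /d2; congr Num.sqrt; apply: eq_bigr => k _; rewrite -sqrrN opprB. Qed.

Lemma d2_pt3 u v w u' v' w' :
  d2 (pt3 u v w) (pt3 u' v' w') = Num.sqrt ((u - u') ^+ 2 + (v - v') ^+ 2 + (w - w') ^+ 2).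
Proof. by rewrite /d2 !big_ord_recl big_ord0 !mxE /= addr0 addrA. Qed.

Lemma det_bmat_spectral t alpha k m x y z :
  eigenvalue (amat t alpha) m%:C -> k * (2 * m - 1) = 1 ->
  pt3 x y z = k *: pt3 (m - t) (- Re alpha) (- Im alpha) -> \det (bmat x y z) = 0.
Proof.
move=> ev km; rewrite scale_pt3 !mulrN => /pt3_inj[-> -> ->].
by rewrite bmat_spectral // detZ eigenvalue_det // mulr0.
Qed.

Lemma abs_compatible_amat_bmat t alpha x y z :
  abs_compatible (amat t alpha) (bmat x y z) <->
  d2 (pt3 x y z) (pt3 t (Re alpha) (Im alpha))
  + d2 (pt3 x y z) (pt3 (1 - t) (- Re alpha) (- Im alpha)) = 1.
Proof.
rewrite /abs_compatible amat_sub_bmat one_sub_amat_bmat !mabs_pauli_mx.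
rewrite ![d2 (pt3 x y z) _]d2C !d2_pt3 -raddfD -rmorphD /=.
split=> [/matrixP/(_ 0 0) | ->]; last by rewrite rmorph1.
by rewrite !mxE /= mulr1n => /eq_complexP[].
Qed.

End TwoByTwo.

Theorem theorem3p7 (R : realType) (t : R) (alpha : R[i]) (x y z : R) (l1 l2 : R) :
  inS (amat t alpha) -> inS (bmat x y z) ->
  eigenvalue (amat t alpha) l1%:C -> eigenvalue (amat t alpha) l2%:C -> l2 < l1 ->
  let at_ := pt3 t (complex.Re alpha) (complex.Im alpha) in
  let at' := pt3 (1 - t) (- complex.Re alpha) (- complex.Im alpha) in
  let pa := (l1 - l2)^-1 *: pt3 (t - l2) (complex.Re alpha) (complex.Im alpha) in
  let pa' := (l1 - l2)^-1 *: pt3 (l1 - t) (- complex.Re alpha) (- complex.Im alpha) in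
  let bt := pt3 x y z in
  abs_compatible (amat t alpha) (bmat x y z) <->
  (d2 bt at_ + d2 bt at' = 1 /\ bt <> pa /\ bt <> pa').
Proof.
move=> _ [_ [_ [_ [det_b_gt0 _]]]] ev1 ev2 l21 at_ at' pa pa' bt.
have l12 := eigenvalue_amat_sum ev1 ev2 l21.
have e_spec : (l1 - l2)^-1 * (2 * l1 - 1) = 1.
  by rewrite (_ : 2 * l1 - 1 = l1 - l2) ?mulVf // ?subr_eq0 ?gt_eqF //; lra.
have not_spectral k m : eigenvalue (amat t alpha) m%:C -> k * (2 * m - 1) = 1 ->
    bt <> k *: pt3 (m - t) (- complex.Re alpha) (- complex.Im alpha).
  by move=> ev km /(det_bmat_spectral ev km) det0; rewrite det0 ltxx in det_b_gt0.
rewrite abs_compatible_amat_bmat; split=> [E | [] //]; split; first exact: E.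
split; last exact: not_spectral ev1 e_spec.
have -> : pa = - (l1 - l2)^-1 *: pt3 (l2 - t) (- complex.Re alpha) (- complex.Im alpha).
  by rewrite /pa !scale_pt3; congr pt3; ring.
by apply: not_spectral ev2 _; rewrite mulNr -mulrN -[RHS]e_spec; congr (_ * _); lra.
Qed.
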